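(* Let $G$ be the free group on $\{x,y\}$ and $k$ a field. Then the $k$-subalgebra of $k[G]$ generated by $x+x^{-1}$ and $y+y^{-1}$ is the free $k$-algebra on $\{x+x^{-1},y+y^{-1}\}$.
   Context: The free $k$-algebra on a set $X$ is the algebra of noncommutative polynomials in the variables $X$. *)

From HB Require Import structures.
From mathcomp Require Import all_boot all_order all_algebra.
Set Implicit Arguments. Unset Strict Implicit. Unset Printing Implicit Defensive.
Import GRing.Theory.
Local Open Scope ring_scope.

(* A letter is (generator, inverted?): generator false = x, true = y;
   inverted = true means the inverse generator. *)
Definition letter := (bool * bool)%type.
Definition linv (l : letter) : letter := (l.1, ~~ l.2).

Definition push (l : letter) (w : seq letter) : seq letter :=
  match w with
  | l' :: w' => if l' == linv l then w' else l :: w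
  | [::] => [:: l]
  end.

Definition nf (w : seq letter) : seq letter := foldr push [::] w.

(* elements of G are the reduced words (nf w == w); group product *)
Definition reducedw (w : seq letter) : bool := nf w == w.
Definition gmul (u v : seq letter) : seq letter := nf (u ++ v).

Definition gx : seq letter := [:: (false, false)].
Definition gxinv : seq letter := [:: (false, true)].
Definition gy : seq letter := [:: (true, false)].
Definition gyinv : seq letter := [:: (true, true)].

(* An element of k[G] is given by a finite formal sum \sum c_i g_i,
   represented as a list of pairs (c_i, w_i); the coefficient of the group
   element g (a reduced word) is the sum of the c_i with nf w_i = g. Two
   representations denote the same element of k[G] iff all coefficients agree. *)
Definition kG (k : fieldType) := seq (k * seq letter).

Definition coefG (k : fieldType) (f : kG k) (g : seq letter) : k :=
  \sum_(p <- f | nf p.2 == g) p.1.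

Definition mulG (k : fieldType) (f h : kG k) : kG k :=
  [seq (a.1 * b.1, gmul a.2 b.2) | a <- f, b <- h].

Definition oneG (k : fieldType) : kG k := [:: (1, [::])].

Definition aG (k : fieldType) : kG k := [:: (1, gx); (1, gxinv)].
Definition bG (k : fieldType) : kG k := [:: (1, gy); (1, gyinv)].

(* Noncommutative polynomials: finite formal sums of monomials (words over
   {X, Y}, false = X, true = Y); coefficient of word w is the sum of the
   coefficients listed with w. *)
Definition kXY (k : fieldType) := seq (k * seq bool).

Definition coefF (k : fieldType) (p : kXY k) (w : seq bool) : k :=
  \sum_(q <- p | q.2 == w) q.1.

Definition evalword (k : fieldType) (w : seq bool) : kG k :=
  foldr (fun c acc => mulG (if c then bG k else aG k) acc) (oneG k) w.

Definition evalF (k : fieldType) (p : kXY k) : kG k :=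
  flatten [seq [seq (q.1 * r.1, r.2) | r <- evalword k q.2] | q <- p].

From mathcomp Require Import all_boot all_order all_algebra.
Set Implicit Arguments. Unset Strict Implicit. Unset Printing Implicit Defensive.
Import GRing.Theory.
Local Open Scope ring_scope.

(* The image of a monomial v of length n is a sum of reduced words of length
   at most n, and it contains the positive word obtained from v (x for X, y
   for Y) exactly once; no other monomial of length at most n produces that
   positive word.  So the map is triangular with respect to length: the
   coefficient of a longest monomial of p can be read off the image of p at
   the corresponding positive word, and descending induction on length shows
   that all coefficients of p vanish when its image does. *)

Definition posw (w : seq bool) : seq letter := [seq (c, false) | c <- w].

Lemma size_push l u : (size (push l u) <= (size u).+1)%N.
Proof. by case: u => [|l' u] //=; case: ifP => //= _; apply: leqW. Qed.

Lemma size_nf u : (size (nf u) <= size u)%N.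
Proof. by elim: u => [|l u IH] //=; apply: leq_trans (size_push _ _) _. Qed.

Lemma nf_reduced_behead l u : nf (l :: u) = l :: u -> nf u = u.
Proof.
rewrite /=; case Enf: (nf u) => [|l' z] /=; first by case=> <-.
case: ifP => _; last by case=> <-.
by move=> Ez; have := size_nf u; rewrite Enf Ez /= ltnNge leqnSn.
Qed.

Lemma nf_push l u : nf u = u -> nf (push l u) = push l u.
Proof.
case: u => [|l' u] //= Hu.
case: ifP => inv_l'; first exact: nf_reduced_behead Hu.
by rewrite /= Hu /= inv_l'.
Qed.

Lemma gmul_letter l u : nf u = u -> gmul [:: l] u = push l u.
Proof. by rewrite /gmul /= => ->. Qed.

Lemma push_posw c d u w : (size u <= size w)%N ->
  (push (c, false) u == (d, false) :: posw w) = (c == d) && (u == posw w).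
Proof.
case: u => [|l' u] /= le_uw; first by rewrite eqseq_cons xpair_eqE eqxx andbT.
case: ifP => [/eqP-> | _]; last by rewrite eqseq_cons xpair_eqE eqxx andbT.
have -> : (u == (d, false) :: posw w) = false.
  apply/negbTE; apply: contraTN le_uw => /eqP->.
  by rewrite /= size_map -ltnNge ltnW.
case: w {le_uw} => [|e w]; rewrite /= ?andbF //.
by rewrite eqseq_cons xpair_eqE eqbF_neg /= andbF /= andbF.
Qed.

Lemma push_inv_posw c d u w : (size u <= size w)%N ->
  (push (c, true) u == (d, false) :: posw w) = false.
Proof.
case: u => [|l' u] /= le_uw; first by rewrite eqseq_cons xpair_eqE andbF.
case: ifP => _; last by rewrite eqseq_cons xpair_eqE andbF.
apply/negbTE; apply: contraTN le_uw => /eqP->.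
by rewrite /= size_map -ltnNge ltnW.
Qed.

Section EvalWord.
Variable k : fieldType.

Lemma evalword_cons c v : evalword k (c :: v) =
  mulG [:: (1, [:: (c, false)]); (1, [:: (c, true)])] (evalword k v).
Proof. by case: c. Qed.

Lemma mem_evalword v b :
  b \in evalword k v -> nf b.2 = b.2 /\ (size b.2 <= size v)%N.
Proof.
elim: v b => [|c v IH] b; first by rewrite inE => /eqP->.
rewrite evalword_cons => /allpairsP [[a b'] /= [a_gen /IH [nf_b' le_b'] ->]] /=.
move: a_gen; rewrite !inE => /orP[] /eqP-> /=; rewrite gmul_letter //;
  by split; [apply: nf_push | apply: leq_trans (size_push _ _) _].
Qed.

Lemma coefG_evalword_cons c v g : coefG (evalword k (c :: v)) g =
  \sum_(b <- evalword k v | push (c, false) b.2 == g) b.1 +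
  \sum_(b <- evalword k v | push (c, true) b.2 == g) b.1.
Proof.
rewrite evalword_cons /mulG /coefG /= cats0 big_cat !big_map /=.
congr (_ + _); rewrite big_seq_cond [RHS]big_seq_cond;
  apply: eq_big => [b | b _]; rewrite ?mul1r //.
all: by case b_v: (b \in _) => //=; have [nf_b _] := mem_evalword b_v;
  rewrite gmul_letter // nf_push.
Qed.

Lemma coefG_evalword v g :
  coefG (evalword k v) g = \sum_(b <- evalword k v | b.2 == g) b.1.
Proof.
rewrite /coefG big_seq_cond [RHS]big_seq_cond; apply: eq_bigl => b.
by case b_v: (b \in _) => //=; have [-> _] := mem_evalword b_v.
Qed.

Lemma coefG_evalword_posw v w : (size v <= size w)%N ->
  coefG (evalword k v) (posw w) = (v == w)%:R.
Proof.
elim: w v => [|d w IH] [|c v] //= le_vw.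
- by rewrite /coefG big_cons big_nil addr0.
- by rewrite /coefG big_cons big_nil.
rewrite coefG_evalword_cons.
rewrite [X in _ + X]big_seq_cond [X in _ + X]big_pred0 ?addr0; last first.
  move=> b; case b_v: (b \in _) => //=; have [_ le_b] := mem_evalword b_v.
  exact: push_inv_posw (leq_trans le_b le_vw).
rewrite big_seq_cond (eq_bigl (fun b => (c == d) &&
  ((b \in evalword k v) && (b.2 == posw w)))); last first.
  move=> b; case b_v: (b \in _) => /=; last by rewrite andbF.
  have [_ le_b] := mem_evalword b_v; exact: push_posw (leq_trans le_b le_vw).
rewrite eqseq_cons; case: (c == d) => /=; last by rewrite big_pred0.
by rewrite -big_seq_cond -coefG_evalword IH.
Qed.

End EvalWord.

Section EvalPoly.
Variables (k : fieldType) (p : kXY k).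

Lemma coefG_evalF g :
  coefG (evalF p) g = \sum_(q <- p) q.1 * coefG (evalword k q.2) g.
Proof.
rewrite /coefG /evalF big_flatten big_map; apply: eq_bigr => q _.
by rewrite big_map mulr_sumr.
Qed.

Lemma big_coefF (F : seq bool -> k) :
  \sum_(q <- p) q.1 * F q.2 = \sum_(u <- undup (map snd p)) coefF p u * F u.
Proof.
under [RHS]eq_bigr => u _ do rewrite /coefF mulr_suml big_mkcond.
rewrite exchange_big /= big_seq [RHS]big_seq; apply: eq_bigr => q q_p.
have q2_p : q.2 \in undup (map snd p) by rewrite mem_undup map_f.
rewrite (bigD1_seq q.2) ?undup_uniq //= eqxx big1 ?addr0 // => u /negbTE.
by rewrite eq_sym => ->.
Qed.

Lemma coefF_notin w : w \notin map snd p -> coefF p w = 0.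
Proof.
move=> w_p; rewrite /coefF big_seq_cond big_pred0 // => q.
by apply/negbTE/andP => -[q_p /eqP q2]; rewrite -q2 map_f in w_p.
Qed.

Lemma coefF_eq_coefG_evalF w :
  (forall u, (size w < size u)%N -> coefF p u = 0) ->
  coefF p w = coefG (evalF p) (posw w).
Proof.
move=> longer0.
rewrite coefG_evalF (big_coefF (fun u => coefG (evalword k u) (posw w))).
transitivity (\sum_(u <- undup (map snd p)) coefF p u * (u == w)%:R).
  rewrite -(big_coefF (fun u => (u == w)%:R)) /coefF big_mkcond.
  by apply: eq_bigr => q _; case: eqP; rewrite ?mulr1 ?mulr0.
apply: eq_bigr => u _; case: (leqP (size u) (size w)) => [le_uw | lt_wu].
  by rewrite coefG_evalword_posw.
by rewrite longer0 ?mul0r.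
Qed.

End EvalPoly.

Theorem mainTheorem5 (k : fieldType) (p : kXY k) :
  (forall g : seq letter, coefG (evalF p) g = 0) ->
  forall w : seq bool, coefF p w = 0.
Proof.
move=> evalF0; set M := \max_(q <- p) size q.2.
suff coefF0 n w : (M < size w + n)%N -> coefF p w = 0.
  by move=> w; apply: (coefF0 M.+1); rewrite addnS ltnS leq_addl.
elim: n w => [|n IH] w lt_Mw.
  apply: coefF_notin; apply: contraTN lt_Mw => /mapP [q q_p ->].
  by rewrite addn0 -leqNgt; apply: leq_bigmax_seq.
rewrite coefF_eq_coefG_evalF ?evalF0 // => u lt_wu; apply: IH.
by rewrite (leq_trans lt_Mw) // addnS -addSn leq_add2r.
Qed.
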